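(* Let $G$ be a complete geometric graph and let $B$ be a blocker for $\mathcal{T}_{\leq 4}(G)$. Let $b$ be a boundary vertex of $G$, and let $[a,b]$ and $[b,c]$ be the two boundary edges of $G$ containing $b$. If at least one of $[a,b]$, $[b,c]$ is not in $B$, then $b$ is a leaf of $B$ (i.e., has degree exactly 1 in $B$).
   Context: A geometric graph is a graph whose vertices are points in the plane in general position (no three collinear) and whose edges are straight segments between pairs of vertices; $G$ is complete if all pairs of vertices are joined. Boundary vertices and boundary edges of $G$ are those lying on the boundary of the convex hull of $V(G)$. $\mathcal{T}_{\leq k}(G)$ denotes the family of all simple (non-crossing) spanning trees of $G$ of (graph) diameter at most $k$. A subgraph $B$ blocks a family $\mathcal{F}$ of subgraphs if it shares at least one edge with every member of $\mathcal{F}$; a blocker of $\mathcal{F}$ is a subgraph that blocks $\mathcal{F}$ and has the smallest possible number of edges among all subgraphs blocking $\mathcal{F}$. *)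

From mathcomp Require Import all_boot all_order all_algebra.
From mathcomp Require Import reals.
Set Implicit Arguments. Unset Strict Implicit. Unset Printing Implicit Defensive.
Import Order.TTheory GRing.Theory Num.Theory.
Local Open Scope ring_scope.

Section GeomGraph.
Variables (R : realType) (T : finType) (p : T -> R * R).

Definition det3 (a b c : R * R) : R :=
  (b.1 - a.1) * (c.2 - a.2) - (b.2 - a.2) * (c.1 - a.1).

Definition general_position : Prop :=
  injective p /\
  forall x y z : T, x != y -> y != z -> x != z -> det3 (p x) (p y) (p z) != 0.

Definition on_segment (a b z : R * R) : Prop :=
  exists t : R, 0 <= t <= 1 /\
    z = ((1 - t) * a.1 + t * b.1, (1 - t) * a.2 + t * b.2).

(* edges are 2-element vertex sets; the complete geometric graph G on T *)
Definition complete_edges : {set {set T}} := [set e : {set T} | #|e| == 2%N].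

Definition adj (E : {set {set T}}) : rel T := fun x y => [set x; y] \in E.

Definition connected_sp (E : {set {set T}}) : Prop :=
  forall x y : T, connect (adj E) x y.

Definition acyclic (E : {set {set T}}) : Prop :=
  ~ exists s : seq T, [/\ uniq s, (3 <= size s)%N & cycle (adj E) s].

Definition spanning_tree (E : {set {set T}}) : Prop :=
  E \subset complete_edges /\ connected_sp E /\ acyclic E.

Definition diam_le (E : {set {set T}}) (k : nat) : Prop :=
  forall x y : T, exists s : seq T,
    [/\ (size s <= k)%N, path (adj E) x s & last x s = y].

(* simple = non-crossing: edges with no common endpoint are disjoint segments
   (in general position, edges sharing an endpoint meet only there) *)
Definition simple_geo (E : {set {set T}}) : Prop :=
  forall x y u v : T, [set x; y] \in E -> [set u; v] \in E ->
    [disjoint [set x; y] & [set u; v]] ->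
    ~ exists z, on_segment (p x) (p y) z /\ on_segment (p u) (p v) z.

Definition T_le4 (E : {set {set T}}) : Prop :=
  [/\ spanning_tree E, simple_geo E & diam_le E 4].

Definition blocks (B : {set {set T}}) (F : {set {set T}} -> Prop) : Prop :=
  forall E, F E -> exists e, e \in B :&: E.

Definition blocker (F : {set {set T}} -> Prop) (B : {set {set T}}) : Prop :=
  [/\ B \subset complete_edges, blocks B F &
      forall B' : {set {set T}}, B' \subset complete_edges -> blocks B' F -> (#|B| <= #|B'|)%N].

Definition boundary_vertex (b : T) : Prop :=
  ~ exists w : T -> R,
    [/\ forall x, 0 <= w x, w b = 0, \sum_x w x = 1 &
        p b = (\sum_x w x * (p x).1, \sum_x w x * (p x).2)].

(* boundary edge: [x,y] is a convex-hull edge, i.e. all vertices lie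
   (weakly) on one side of the line xy *)
Definition boundary_edge (x y : T) : Prop :=
  x != y /\
  ((forall z, 0 <= det3 (p x) (p y) (p z)) \/
   (forall z, det3 (p x) (p y) (p z) <= 0)).

Definition degree (B : {set {set T}}) (b : T) : nat := #|[set e in B | b \in e]|.

End GeomGraph.

From mathcomp Require Import all_boot all_order all_algebra.
From mathcomp Require Import reals.
From mathcomp.algebra_tactics Require Import ring lra.
From mathcomp Require Import zify.
Set Implicit Arguments. Unset Strict Implicit. Unset Printing Implicit Defensive.
Import Order.TTheory GRing.Theory Num.Theory.

(* Let n = #|T|.  The star at b is a simple spanning tree of diameter 2 and
   it meets every spanning tree, so B has an edge at b and, being a blocker,
   at most n - 1 edges.  It therefore suffices to find n - 2 edges of B that
   avoid b, given a hull edge [a,b] not in B.  Grow a set S with a in S and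
   b not in S.  If no edge of B joined S to the set Y of the remaining
   vertices other than b, the following tree of depth 2 around a would
   avoid B: join b and every vertex of Y to a, and every other x in S to its
   angular neighbour in Y around a.  Its edges do not cross, since all the
   vertices lie on one side of the line ab and no vertex of Y lies
   angularly between x and its neighbour.  Hence S can be grown by a vertex
   of Y together with a new edge of B inside S, until #|S| = n - 1. *)

Lemma disjoint_set2 (T : finType) (x1 y1 x2 y2 : T) :
  [disjoint [set x1; y1] & [set x2; y2]] ->
  [/\ x1 != x2, x1 != y2, y1 != x2 & y1 != y2].
Proof.
move=> d; have := disjointFr d (x := x1); have := disjointFr d (x := y1).
rewrite !inE !eqxx orbT /= => /(_ isT)/norP[? ?] /(_ isT)/norP[? ?].
by split.
Qed.

Lemma cycle_neighbours (T : eqType) (e : rel T) (s : seq T) x :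
  uniq s -> 3 <= size s -> cycle e s -> x \in s ->
  exists y z, [/\ y != z, y \in s, z \in s, e y x & e x z].
Proof.
move=> us ss cs /rot_to[i s' Es].
have mem_s y : y \in s' -> y \in s.
  by move=> ys; rewrite -(mem_rot i) Es inE ys orbT.
rewrite -(rot_uniq i) Es in us; rewrite -(size_rot i) Es in ss.
rewrite -(rot_cycle i) Es in cs.
case: s' {Es} mem_s us ss cs => [|z s'] // mem_s.
case/lastP: s' mem_s => [|t y] mem_s //= /and3P[_ zt _] _.
rewrite rcons_path last_rcons /= => /and3P[exz _ eyx].
exists y, z; split; rewrite ?mem_s ?inE ?mem_rcons ?inE ?eqxx ?orbT //.
by apply: contraNneq zt => ->; rewrite mem_rcons inE eqxx.
Qed.

Lemma eq_set2_cases (T : finType) (u w v z : T) : v != z ->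
  [set u; w] = [set v; z] -> (u = v /\ w = z) \/ (u = z /\ w = v).
Proof.
move=> nvz E.
have hu : u \in [set v; z] by rewrite -E !inE eqxx.
have hv : v \in [set u; w] by rewrite E !inE eqxx.
have hz : z \in [set u; w] by rewrite E !inE eqxx orbT.
move: hu hv hz; rewrite !inE.
case: (eqVneq u v) => [->|_] /=.
  case: (eqVneq z v) => [ezv|_]; first by rewrite ezv eqxx in nvz.
  by move=> _ _ /eqP ->; left.
case: (eqVneq u z) => [->|_] //= _.
case: (eqVneq v z) => [evz|_] /=; first by rewrite evz eqxx in nvz.
by move=> /eqP -> _; right.
Qed.

Lemma exists_maximal (T : finType) (A : {set T}) (r : rel T) :
  (forall x y z, x \in A -> y \in A -> z \in A -> r x y -> r y z -> r x z) ->
  (forall x, ~~ r x x) ->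
  forall m0, m0 \in A -> exists2 m, m \in A & forall w, w \in A -> ~~ r m w.
Proof.
move=> r_trans r_irr m0 m0A.
pose succ x := #|[set w in A | r x w]|.
case: (@arg_minnP _ m0 (mem A) succ m0A) => m mA mmin.
exists m => // w wA; apply/negP => rmw.
have : succ w < succ m.
  apply/proper_card/properP; split.
    by apply/subsetP=> z; rewrite !inE => /andP[zA rwz]; rewrite zA (r_trans m w z).
  by exists w; rewrite !inE ?wA ?rmw ?(negbTE (r_irr w)).
by rewrite ltnNge mmin.
Qed.

Lemma adjC (T : finType) (E : {set {set T}}) : symmetric (adj E).
Proof. by move=> u w; rewrite /adj setUC. Qed.

Lemma diam_le_connected (T : finType) (E : {set {set T}}) k :
  diam_le E k -> connected_sp E.
Proof. by move=> dE x y; have [s [_ ps ls]] := dE x y; apply/connectP; exists s. Qed.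

Lemma degree_split (T : finType) (B : {set {set T}}) b :
  degree B b + #|[set e in B | b \notin e]| = #|B|.
Proof.
rewrite -(cardsID [set e : {set T} | b \in e] B) /degree.
by congr (_ + _); apply: eq_card => e; rewrite !inE andbC.
Qed.

Section ParentTree.
Variables (T : finType) (r : T) (par : T -> T).
Hypothesis par_neq : forall v, v != r -> par v != v.
Hypothesis par_depth2 : forall v, v != r -> par v != r -> par (par v) = r.

Definition parent_tree : {set {set T}} := [set [set v; par v] | v in [set~ r]].

Lemma adj_par v : v != r -> adj parent_tree v (par v).
Proof. by move=> vr; apply/imsetP; exists v; rewrite // !inE. Qed.

Lemma adj_parent_treeP u w : adj parent_tree u w ->
  (u != r /\ w = par u) \/ (w != r /\ u = par w).
Proof.
case/imsetP=> v; rewrite !inE => vr E.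
have nvp : v != par v by rewrite eq_sym par_neq.
by case: (eq_set2_cases nvp E) => [[-> ->]|[-> ->]]; [left|right].
Qed.

Definition depth v := if v == r then 0 else if par v == r then 1 else 2.

Lemma depth_par v : v != r -> depth (par v) < depth v.
Proof.
move=> vr; rewrite /depth (negbTE vr).
by case: (eqVneq (par v) r) => // pr; rewrite par_depth2 // eqxx.
Qed.

Lemma parent_tree_sub : parent_tree \subset complete_edges T.
Proof.
apply/subsetP=> e /imsetP[v]; rewrite !inE => vr ->.
by rewrite cards2 (eq_sym v) par_neq.
Qed.

Definition path_to_root x :=
  if x == r then [::] else if par x == r then [:: r] else [:: par x; r].
Definition path_from_root y :=
  if y == r then [::] else if par y == r then [:: y] else [:: par y; y].

Lemma path_to_rootP x :
  path (adj parent_tree) x (path_to_root x) /\ last x (path_to_root x) = r.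
Proof.
rewrite /path_to_root; case: (eqVneq x r) => [->|xr] //.
case: (eqVneq (par x) r) => [pr|pr] /=.
  by rewrite -pr adj_par.
by rewrite adj_par //= -(par_depth2 xr pr) adj_par.
Qed.

Lemma path_from_rootP y :
  path (adj parent_tree) r (path_from_root y) /\ last r (path_from_root y) = y.
Proof.
rewrite /path_from_root; case: (eqVneq y r) => [->|yr] //.
case: (eqVneq (par y) r) => [pr|pr] /=.
  by rewrite -pr adjC adj_par.
by rewrite -(par_depth2 yr pr) adjC adj_par //= adjC adj_par.
Qed.

Lemma parent_tree_diam : diam_le parent_tree 4.
Proof.
move=> x y; exists (path_to_root x ++ path_from_root y).
have [px lx] := path_to_rootP x; have [py ly] := path_from_rootP y.
split; last by rewrite last_cat lx.
- rewrite size_cat /path_to_root /path_from_root.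
  by case: (x == r); case: (par x == r); case: (y == r); case: (par y == r).
- by rewrite cat_path px lx.
Qed.

Lemma parent_tree_acyclic : acyclic parent_tree.
Proof.
case=> s [us ss cs].
have [x0 x0s] : exists x0, x0 \in s.
  by case: s ss {us cs} => [|x0 s] //; exists x0; rewrite inE eqxx.
case: (@arg_maxnP _ x0 (mem s) depth x0s) => m ms mmax.
have nb_par y : y \in s -> adj parent_tree y m -> y = par m.
  move=> ys /adj_parent_treeP[[yr em]|[_ //]].
  by move: (mmax y ys); rewrite /= leqNgt em depth_par.
have [y [z [yz ys zs ym mz]]] := cycle_neighbours us ss cs ms.
by move: yz; rewrite (nb_par y) // (nb_par z) // ?eqxx // adjC.
Qed.

Lemma parent_tree_spanning : spanning_tree parent_tree.
Proof.
split; first exact: parent_tree_sub.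
by split; [exact: diam_le_connected parent_tree_diam | exact: parent_tree_acyclic].
Qed.

End ParentTree.

Section Star.
Variables (T : finType) (b : T).

Definition star : {set {set T}} := [set e : {set T} | (#|e| == 2) && (b \in e)].

Lemma adj_star x y : adj star x y = (x != y) && ((x == b) || (y == b)).
Proof. by rewrite /adj inE cards2 !inE (eq_sym b x) (eq_sym b y); case: (x != y). Qed.

Lemma star_diam : diam_le star 4.
Proof.
move=> x y; case: (eqVneq x y) => [<-|xy]; first by exists [::].
case: (eqVneq x b) => [xb|xb]; first by exists [:: y]; rewrite /= adj_star xy xb eqxx.
case: (eqVneq y b) => [yb|yb]; first by exists [:: y]; rewrite /= adj_star xy yb eqxx orbT.
by exists [:: b; y]; rewrite /= !adj_star xb eqxx orbT eq_sym yb.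
Qed.

Lemma star_acyclic : acyclic star.
Proof.
case=> s [us ss cs].
have [x xs xb] : exists2 x, x \in s & x != b.
  case: s us ss {cs} => [|x0 [|x1 s]] //= /andP[]; rewrite inE negb_or => /andP[x01 _] _ _.
  case: (eqVneq x0 b) => [x0b|]; last by exists x0; rewrite ?inE ?eqxx.
  by exists x1; rewrite ?inE ?eqxx ?orbT // -x0b eq_sym.
have [y [z [yz _ _ yx xz]]] := cycle_neighbours us ss cs xs.
move: yx xz; rewrite !adj_star (negbTE xb) orbF /= => /andP[_ /eqP yb] /andP[_ /eqP zb].
by rewrite yb zb eqxx in yz.
Qed.

Lemma star_T_le4 (R : realType) (p : T -> R * R) : T_le4 p star.
Proof.
have sub : star \subset complete_edges T by apply/subsetP=> e; rewrite !inE => /andP[].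
split=> //; last exact: star_diam.
  by split=> //; split; [exact: diam_le_connected star_diam | exact: star_acyclic].
move=> x y u v; rewrite !inE => /andP[_ bxy] /andP[_ buv] /pred0P/(_ b).
by rewrite /= !inE bxy buv.
Qed.

Lemma star_blocks_spanning_trees a : a != b -> blocks star (@spanning_tree T).
Proof.
move=> ab E [Esub [conn _]].
case/connectP: (conn b a) => [[|s0 s]] /=; first by move=> _ ab'; rewrite ab' eqxx in ab.
case/andP=> bs0 _ _; have bs0E : [set b; s0] \in E := bs0.
exists [set b; s0]; rewrite inE bs0E andbT inE !inE eqxx andbT.
by move: (subsetP Esub _ bs0E); rewrite inE.
Qed.

Lemma card_star : (#|star| <= #|T|.-1)%N.
Proof.
rewrite -(cardsC1 b); apply: leq_trans (leq_imset_card (fun v => [set b; v]) _).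
apply/subset_leq_card/subsetP=> e; rewrite inE => /andP[/eqP e2 be].
have : [set b] \proper e by rewrite properEcard sub1set be cards1 e2.
case/properP=> _ [v ve]; rewrite inE => vb.
apply/imsetP; exists v; first by rewrite !inE.
apply/eqP; rewrite eq_sym eqEcard e2 cards2 eq_sym vb leqnn andbT.
by rewrite subUset !sub1set be ve.
Qed.

End Star.

Local Open Scope ring_scope.

Lemma mul_gt0_same_sign (R : realDomainType) (x y : R) :
  x != 0 -> y != 0 -> (0 < x) = (0 < y) -> 0 < x * y.
Proof.
move=> x0 y0; case: (ltrP 0 x) => hx; case: (ltrP 0 y) => hy //= _; first exact: mulr_gt0.
have x_neg : x < 0 by rewrite lt_neqAle x0.
by rewrite nmulr_rgt0 // lt_neqAle y0.
Qed.

Lemma mul_le0_opp_sign (R : realDomainType) (x y : R) :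
  (0 < x) != (0 < y) -> x * y <= 0.
Proof.
by case: (ltrP 0 x) => hx; case: (ltrP 0 y) => hy //= _; nra.
Qed.

Section Orientation.
Variable R : realType.
Implicit Types P Q u v s t z : R * R.

Lemma det3_comb P Q u v k :
  det3 P Q ((1 - k) * u.1 + k * v.1, (1 - k) * u.2 + k * v.2) =
  (1 - k) * det3 P Q u + k * det3 P Q v.
Proof. by rewrite /det3 /=; ring. Qed.

Lemma det3_swap12 P Q z : det3 Q P z = - det3 P Q z.
Proof. by rewrite /det3; ring. Qed.

Lemma det3_swap23 P u v : det3 P v u = - det3 P u v.
Proof. by rewrite /det3; ring. Qed.

Lemma det3_PQP P Q : det3 P Q P = 0.
Proof. by rewrite /det3; ring. Qed.

Lemma det3_PQQ P Q : det3 P Q Q = 0.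
Proof. by rewrite /det3; ring. Qed.

Lemma det3_plucker P Q u v w :
  det3 P Q v * det3 P u w = det3 P u v * det3 P Q w + det3 P v w * det3 P Q u.
Proof. by rewrite /det3; ring. Qed.

(* If [u], [v] and [w] lie strictly on one side of the line [PQ], the
   counterclockwise order around [P] is transitive on them. *)
Lemma det3_ccw_trans P Q u v w :
  0 < det3 P Q u * det3 P Q v -> 0 < det3 P Q w * det3 P Q v ->
  0 < det3 P u v -> 0 < det3 P v w -> 0 < det3 P u w.
Proof.
have := det3_plucker P Q u v w.
move: (det3 P Q u) (det3 P Q v) (det3 P Q w) (det3 P u v) (det3 P v w) (det3 P u w).
move=> su sv sw duv dvw duw E uv wv duv0 dvw0.
have : 0 < sv * (sv * duw) by rewrite E; nra.
have sv0 : sv != 0 by apply: contraTneq uv => ->; rewrite mulr0 ltxx.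
by rewrite mulrA pmulr_rgt0 // lt_def mulf_neq0 //= -expr2 sqr_ge0.
Qed.

Lemma on_segmentC u v z : on_segment u v z -> on_segment v u z.
Proof.
case=> k [/andP[k0 k1] ->]; exists (1 - k); split; first by apply/andP; split; lra.
by congr (_, _); ring.
Qed.

(* A segment [uv] strictly on one side of the line [PQ] cannot meet a
   segment [st] with [t] on the line and [s] weakly on the other side. *)
Lemma line_separates_segments P Q u v s t z :
  on_segment u v z -> on_segment s t z ->
  det3 P Q t = 0 -> det3 P Q s * det3 P Q u <= 0 ->
  0 < det3 P Q u * det3 P Q v -> False.
Proof.
case=> k [/andP[k0 k1] zuv]; case=> l [/andP[l0 l1] zst] ht hsu huv.
have := det3_comb P Q u v k; have := det3_comb P Q s t l.
rewrite -zuv -zst ht mulr0 addr0.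
move: (det3 P Q z) (det3 P Q u) (det3 P Q v) (det3 P Q s) hsu huv.
move=> fz fu fv fs hsu huv fzs fzuv.
have : fz * fu <= 0 by rewrite fzs -mulrA; apply: mulr_ge0_le0; rewrite ?subr_ge0.
have fu2 : 0 < fu * fu.
  by rewrite lt_def -expr2 sqr_ge0 sqrf_eq0 andbT; apply: contraTneq huv => ->; rewrite mul0r ltxx.
have : fz * fu = (1 - k) * (fu * fu) + k * (fu * fv) by rewrite fzuv; ring.
have : 0 < (1 - k) * (fu * fu) + k * (fu * fv).
  by move: (fu * fu) (fu * fv) fu2 huv k0 k1 => X Y *; nra.
lra.
Qed.

End Orientation.

Section HullEdge.
Variables (R : realType) (T : finType) (p : T -> R * R).
Hypothesis gp : general_position p.
Variables (a b : T).
Hypothesis ab : a != b.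
Hypothesis hull_ab :
  (forall z, 0 <= det3 (p a) (p b) (p z)) \/ (forall z, det3 (p a) (p b) (p z) <= 0).

Definition ccw_lt u v := 0 < det3 (p a) (p u) (p v).

Let off_ab z := (z != a) && (z != b).

Lemma det3_neq0 x y z : x != y -> y != z -> x != z -> det3 (p x) (p y) (p z) != 0.
Proof. by move=> *; apply: gp.2. Qed.

Lemma side_ab_gt0 u v : off_ab u -> off_ab v ->
  0 < det3 (p a) (p b) (p u) * det3 (p a) (p b) (p v).
Proof.
move=> /andP[ua ub] /andP[va vb].
have nu : det3 (p a) (p b) (p u) != 0 by apply: det3_neq0; rewrite // eq_sym.
have nv : det3 (p a) (p b) (p v) != 0 by apply: det3_neq0; rewrite // eq_sym.
apply: mul_gt0_same_sign => //.
by case: hull_ab => H; [rewrite !lt_def nu nv !H | rewrite !ltNge !H].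
Qed.

Lemma ccw_lt_trans u v w : off_ab u -> off_ab v -> off_ab w ->
  ccw_lt u v -> ccw_lt v w -> ccw_lt u w.
Proof. by move=> ou ov ow; apply: det3_ccw_trans; apply: side_ab_gt0. Qed.

Lemma ccw_lt_irr u : ~~ ccw_lt u u.
Proof. by rewrite /ccw_lt det3_PQQ ltxx. Qed.

Lemma ccw_lt_asym u v : ccw_lt u v -> ~~ ccw_lt v u.
Proof. by rewrite /ccw_lt det3_swap23 oppr_gt0 -leNgt => /ltW. Qed.

Lemma ccw_lt_total u v : u != v -> u != a -> v != a -> ccw_lt u v || ccw_lt v u.
Proof.
move=> uv ua va; rewrite /ccw_lt (det3_swap23 (p a) (p u)) oppr_gt0.
have : det3 (p a) (p u) (p v) != 0 by apply: det3_neq0; rewrite // eq_sym.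
by case: ltrgtP.
Qed.

Lemma hull_edge_no_cross u w z : off_ab u -> off_ab w ->
  on_segment (p b) (p a) z -> on_segment (p u) (p w) z -> False.
Proof.
move=> ou ow zba zuw.
apply: (line_separates_segments (P := p a) (Q := p b) zuw zba (det3_PQP _ _)).
  by rewrite det3_PQQ mul0r.
exact: side_ab_gt0.
Qed.

Section CutTree.
Variable S : {set T}.
Hypotheses (aS : a \in S) (bS : b \notin S).

Definition outside := [set w | (w \notin S) && (w != b)].

Variable y0 : T.
Hypothesis y0_out : y0 \in outside.

Lemma outside_off_ab y : y \in outside -> off_ab y.
Proof.
by rewrite inE /off_ab => /andP[yS ->]; rewrite andbT; apply: contraNneq yS => ->.
Qed.

Lemma outside_neq_a y : y \in outside -> y != a.
Proof. by case/outside_off_ab/andP. Qed.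

Lemma S_off_ab x : x \in S -> x != a -> off_ab x.
Proof. by move=> xS xa; rewrite /off_ab xa; apply: contraTneq xS => ->. Qed.

Lemma outside_neq_S y x : y \in outside -> x \in S -> y != x.
Proof. by rewrite inE => /andP[yS _] xS; apply: contraNneq yS => ->. Qed.

Definition below x := [set y in outside | ccw_lt y x].

(* The neighbour of [x] in [outside] for the angular order around [a]: the
   last outside vertex before [x], or the first one if there is none. *)
Definition anchor x :=
  if [pick y in below x | [forall w in below x, ~~ ccw_lt y w]] is Some y then y
  else odflt a [pick y in outside | [forall w in outside, ~~ ccw_lt w y]].

Lemma anchor_spec x : x \in S -> x != a -> anchor x \in outside /\
  ((ccw_lt (anchor x) x /\
    forall w, w \in outside -> ccw_lt w x -> ~~ ccw_lt (anchor x) w) \/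
   ((forall w, w \in outside -> ~~ ccw_lt w x) /\
    forall w, w \in outside -> ~~ ccw_lt w (anchor x))).
Proof.
move=> xS xa; rewrite /anchor.
case: pickP => [y /andP[] | no_max].
  rewrite inE => /andP[yY yx] /forall_inP ymax; split=> //; left.
  by split=> // w wY wx; apply: ymax; rewrite inE wY.
have below0 w : w \in outside -> ~~ ccw_lt w x.
  move=> wY; apply/negP=> wx.
  have wb : w \in below x by rewrite inE wY.
  have [m mb mmax] := exists_maximal
    (fun u v z hu hv hz => ccw_lt_trans (outside_off_ab (setIdP hu).1)
       (outside_off_ab (setIdP hv).1) (outside_off_ab (setIdP hz).1)) ccw_lt_irr wb.
  by move: (no_max m); rewrite mb /=; move/negbT/negP; apply; apply/forall_inP.
case: pickP => [y /andP[yY /forall_inP ymin] | no_min]; first by split=> //; right.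
have [m mY mmin] := exists_maximal (r := fun u v => ccw_lt v u)
  (fun u v z hu hv hz h1 h2 => ccw_lt_trans (outside_off_ab hz) (outside_off_ab hv)
     (outside_off_ab hu) h2 h1) ccw_lt_irr y0_out.
by move: (no_min m); rewrite mY /=; move/negbT/negP; case; apply/forall_inP.
Qed.

Lemma anchor_wedge x y : x \in S -> x != a -> y \in outside -> y != anchor x ->
  ccw_lt y x = ccw_lt y (anchor x).
Proof.
move=> xS xa yY y_anc.
have [mY [[mx mmax]|[below0 min0]]] := anchor_spec xS xa; last first.
  by rewrite (negbTE (below0 y yY)) (negbTE (min0 y yY)).
have [yx|yx] := boolP (ccw_lt y x).
  have := ccw_lt_total y_anc (outside_neq_a yY) (outside_neq_a mY).
  by rewrite (negbTE (mmax y yY yx)) orbF.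
have xy : ccw_lt x y.
  by have := ccw_lt_total (outside_neq_S yY xS) (outside_neq_a yY) xa; rewrite (negbTE yx).
have mxy := ccw_lt_trans (outside_off_ab mY) (S_off_ab xS xa) (outside_off_ab yY) mx xy.
by rewrite (negbTE (ccw_lt_asym mxy)).
Qed.

Lemma anchor_cross x x' : x \in S -> x != a -> x' \in S -> x' != a ->
  anchor x != anchor x' -> ccw_lt (anchor x) (anchor x') ->
  (ccw_lt (anchor x') x != ccw_lt (anchor x') x') ||
  (ccw_lt (anchor x) x != ccw_lt (anchor x) x').
Proof.
move=> xS xa x'S x'a anc_neq anc_lt.
have [mY _] := anchor_spec xS xa.
have [m'Y [[m'x' _]|[_ min0]]] := anchor_spec x'S x'a.
  rewrite eq_sym in anc_neq.
  by rewrite (anchor_wedge xS xa m'Y anc_neq) (negbTE (ccw_lt_asym anc_lt)) m'x'.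
by move: (min0 _ mY); rewrite anc_lt.
Qed.

Definition cut_parent v := if (v \in S) && (v != a) then anchor v else a.

Lemma cut_parent_neq v : v != a -> cut_parent v != v.
Proof.
rewrite /cut_parent => va; case: ifP => [/andP[vS _]|_]; last by rewrite eq_sym.
by have [mY _] := anchor_spec vS va; apply: outside_neq_S.
Qed.

Lemma cut_parent_depth2 v : v != a -> cut_parent v != a -> cut_parent (cut_parent v) = a.
Proof.
rewrite /cut_parent => va; case: ifP => [/andP[vS _]|_]; last by rewrite eqxx.
have [mY _] := anchor_spec vS va; move: mY; rewrite inE => /andP[mS _] _.
by rewrite (negbTE mS).
Qed.

Lemma det3_a_outside_neq0 y u : y \in outside -> u != a -> u != y ->
  det3 (p a) (p y) (p u) != 0.
Proof.
move=> yY ua uy; apply: det3_neq0; rewrite 1?eq_sym ?(outside_neq_a yY) //.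
Qed.

Lemma spoke_no_cross y x z : y \in outside -> x \in S -> x != a -> y != anchor x ->
  on_segment (p y) (p a) z -> on_segment (p x) (p (anchor x)) z -> False.
Proof.
move=> yY xS xa y_anc zya zx.
have [mY _] := anchor_spec xS xa.
apply: (line_separates_segments (P := p a) (Q := p y) zx zya (det3_PQP _ _)).
  by rewrite det3_PQQ mul0r.
apply: mul_gt0_same_sign; last exact: anchor_wedge.
  by apply: det3_a_outside_neq0; rewrite // eq_sym outside_neq_S.
by apply: det3_a_outside_neq0; rewrite // ?outside_neq_a // eq_sym.
Qed.

(* The line through [a] and [anchor x] separates [x] from [x'] but not from
   the edge [x', anchor x']. *)
Lemma anchor_line_no_cross x x' z : x \in S -> x != a -> x' \in S -> x' != a ->
  anchor x != anchor x' -> ccw_lt (anchor x) x != ccw_lt (anchor x) x' ->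
  on_segment (p x) (p (anchor x)) z -> on_segment (p x') (p (anchor x')) z -> False.
Proof.
move=> xS xa x'S x'a anc_neq sep zx zx'.
have [mY _] := anchor_spec xS xa; have [m'Y _] := anchor_spec x'S x'a.
have nz u : u \in S -> u != a -> det3 (p a) (p (anchor x)) (p u) != 0.
  by move=> uS ua; apply: det3_a_outside_neq0; rewrite // eq_sym outside_neq_S.
apply: (line_separates_segments (P := p a) (Q := p (anchor x)) zx' zx (det3_PQQ _ _)).
  exact: mul_le0_opp_sign.
apply: mul_gt0_same_sign; [exact: nz | | exact: anchor_wedge].
by apply: det3_a_outside_neq0; rewrite // ?outside_neq_a // eq_sym.
Qed.

Lemma anchor_edges_no_cross x x' z : x \in S -> x != a -> x' \in S -> x' != a ->
  anchor x != anchor x' ->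
  on_segment (p x) (p (anchor x)) z -> on_segment (p x') (p (anchor x')) z -> False.
Proof.
wlog anc_lt : x x' / ccw_lt (anchor x) (anchor x').
  move=> hw xS xa x'S x'a ne zx zx'.
  have [mY _] := anchor_spec xS xa; have [m'Y _] := anchor_spec x'S x'a.
  case/orP: (ccw_lt_total ne (outside_neq_a mY) (outside_neq_a m'Y)) => lt.
    exact: (hw x x').
  by apply: (hw x' x) => //; rewrite eq_sym.
move=> xS xa x'S x'a ne zx zx'.
case/orP: (anchor_cross xS xa x'S x'a ne anc_lt) => sep.
  by apply: (anchor_line_no_cross x'S x'a xS xa _ _ zx' zx); rewrite eq_sym.
exact: (anchor_line_no_cross xS xa x'S x'a ne sep zx zx').
Qed.

Lemma cut_edges_no_cross v1 v2 z : v1 != a -> v2 != a ->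
  [disjoint [set v1; cut_parent v1] & [set v2; cut_parent v2]] ->
  on_segment (p v1) (p (cut_parent v1)) z ->
  on_segment (p v2) (p (cut_parent v2)) z -> False.
Proof.
wlog v2S : v1 v2 / v2 \in S.
  move=> hw v1a v2a d z1 z2; have [v2S|v2S] := boolP (v2 \in S); first exact: (hw v1 v2).
  have [v1S|v1S] := boolP (v1 \in S); first by apply: (hw v2 v1); rewrite // disjoint_sym.
  by have [_ _ _] := disjoint_set2 d; rewrite /cut_parent (negbTE v1S) (negbTE v2S) eqxx.
move=> v1a v2a /disjoint_set2[_ v1m _ p1m] z1 z2.
rewrite /cut_parent v2S v2a /= in v1m p1m z2.
have [mY _] := anchor_spec v2S v2a.
have [v1Sa|v1Sa] := boolP ((v1 \in S) && (v1 != a)).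
  rewrite /cut_parent v1Sa in p1m z1; case/andP: v1Sa => v1S _.
  exact: anchor_edges_no_cross v1S v1a v2S v2a p1m z1 z2.
rewrite /cut_parent (negbTE v1Sa) in z1.
have [v1b|v1b] := eqVneq v1 b.
  rewrite v1b in z1; apply: hull_edge_no_cross z1 z2.
    exact: S_off_ab.
  exact: outside_off_ab.
have v1Y : v1 \in outside by rewrite inE v1b andbT; move: v1Sa; rewrite v1a andbT.
exact: spoke_no_cross v1Y v2S v2a v1m z1 z2.
Qed.

Lemma cut_tree_simple : simple_geo p (parent_tree a cut_parent).
Proof.
have edgeP x y : [set x; y] \in parent_tree a cut_parent -> exists2 v, v != a &
    [set x; y] = [set v; cut_parent v] /\
    forall z, on_segment (p x) (p y) z -> on_segment (p v) (p (cut_parent v)) z.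
  case/imsetP=> v; rewrite !inE => va E; exists v => //; split=> // z.
  have vp : v != cut_parent v by rewrite eq_sym cut_parent_neq.
  by case: (eq_set2_cases vp E) => [[-> ->] //|[-> ->]]; apply: on_segmentC.
move=> x y u w /edgeP[v1 v1a [-> z1]] /edgeP[v2 v2a [-> z2]] d [z [zxy zuw]].
exact: (cut_edges_no_cross v1a v2a d (z1 _ zxy) (z2 _ zuw)).
Qed.

Lemma blocker_meets_cut B : blocks B (T_le4 p) -> [set a; b] \notin B ->
  exists2 u, u \in S & exists2 w, w \in outside & [set u; w] \in B.
Proof.
move=> blk abB.
have tree : T_le4 p (parent_tree a cut_parent).
  split; last exact: parent_tree_diam cut_parent_depth2.
    exact: parent_tree_spanning cut_parent_neq cut_parent_depth2.
  exact: cut_tree_simple.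
have [e /setIP[eB /imsetP[v]]] := blk _ tree; rewrite !inE => va Ee; subst e.
have [vSa|vSa] := boolP ((v \in S) && (v != a)).
  have [mY _] := anchor_spec (proj1 (andP vSa)) va.
  by exists v; [case/andP: vSa | exists (anchor v); rewrite // /cut_parent vSa in eB].
rewrite /cut_parent (negbTE vSa) setUC in eB; exists a => //; exists v => //.
rewrite inE; have [vb|vb] := eqVneq v b; first by rewrite -vb eB in abB.
by move: vSa; rewrite va !andbT.
Qed.

End CutTree.

End HullEdge.

Lemma boundary_edgeC (R : realType) (T : finType) (p : T -> R * R) x y :
  boundary_edge p x y -> boundary_edge p y x.
Proof.
case=> xy hull; split; first by rewrite eq_sym.
by case: hull => H; [right|left] => z; rewrite det3_swap12 ?oppr_le0 ?oppr_ge0.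
Qed.

Section Counting.
Variables (R : realType) (T : finType) (p : T -> R * R) (B : {set {set T}}).
Hypothesis gp : general_position p.
Hypothesis B_blocks : blocks B (T_le4 p).
Variables (a b : T).
Hypothesis ab : a != b.
Hypothesis hull_ab :
  (forall z, 0 <= det3 (p a) (p b) (p z)) \/ (forall z, det3 (p a) (p b) (p z) <= 0).
Hypothesis abB : [set a; b] \notin B.

Lemma grow_cut k : (k <= #|T| - 2)%N -> exists S : {set T},
  [/\ a \in S, b \notin S, #|S| = k.+1 & (k <= #|[set e in B | e \subset S]|)%N].
Proof.
elim: k => [_|k IH k_small].
  by exists [set a]; rewrite !inE eqxx cards1 eq_sym ab.
have [S [aS bS cardS inS]] := IH (ltnW k_small).
have [y0 y0_out] : exists y0, y0 \in outside b S.
  apply/existsP; apply: contraTT k_small => /existsPn none.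
  have : [set: T] \subset b |: S.
    by apply/subsetP=> w _; move: (none w); rewrite !inE negb_and !negbK orbC.
  move/subset_leq_card; rewrite cardsT cardsU1 cardS bS -leqNgt; lia.
have [u uS [w wY uwB]] := blocker_meets_cut gp ab hull_ab aS bS y0_out B_blocks abB.
move: wY; rewrite inE => /andP[wS wb].
exists (w |: S); split; [by rewrite !inE aS orbT | by rewrite !inE negb_or eq_sym wb |
  by rewrite cardsU1 wS cardS | ].
have sub : [set u; w] |: [set e in B | e \subset S] \subset [set e in B | e \subset w |: S].
  apply/subsetP=> e; rewrite !inE => /orP[/eqP ->|/andP[eB eS]].
    by rewrite uwB subUset !sub1set !inE eqxx uS !orbT.
  by rewrite eB (subset_trans eS) // subsetUr.
apply: leq_trans (subset_leq_card sub).
by rewrite cardsU1 inE negb_and subUset !sub1set (negbTE wS) andbF orbT add1n ltnS.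
Qed.

End Counting.

Lemma blocker_leaf_at_hull_edge (R : realType) (T : finType) (p : T -> R * R)
  (B : {set {set T}}) (a b : T) :
  general_position p -> blocker (T_le4 p) B ->
  boundary_edge p a b -> [set a; b] \notin B -> degree B b = 1%N.
Proof.
move=> gp [B_sub B_blocks B_min] [ab hull_ab] abB.
have n_ge2 : (2 <= #|T|)%N by have := max_card [set a; b]; rewrite cards2 ab.
have [S [_ bS _ inS]] := grow_cut gp B_blocks ab hull_ab abB (leqnn (#|T| - 2)).
have deg_pos : (0 < degree B b)%N.
  have [e /setIP[eB e_star]] := B_blocks _ (star_T_le4 b p).
  by apply/card_gt0P; exists e; rewrite inE eB; move: e_star; rewrite inE => /andP[].
have B_small : (#|B| <= #|T|.-1)%N.
  have [[star_sub _] _ _] := star_T_le4 b p.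
  apply: leq_trans (card_star b); apply: B_min => // E [tree _ _].
  exact: star_blocks_spanning_trees ab E tree.
have inS_avoid : [set e in B | e \subset S] \subset [set e in B | b \notin e].
  apply/subsetP=> e; rewrite !inE => /andP[-> eS].
  by apply: contraNN bS => be; apply: (subsetP eS).
have := subset_leq_card inS_avoid; have := degree_split B b.
lia.
Qed.

Theorem lemma1 (R : realType) (T : finType) (p : T -> R * R)
  (B : {set {set T}}) (a b c : T) :
  general_position p ->
  blocker (T_le4 p) B ->
  boundary_vertex p b ->
  a != c -> boundary_edge p a b -> boundary_edge p b c ->
  ([set a; b] \notin B \/ [set b; c] \notin B) ->
  degree B b = 1%N.
Proof.
move=> gp bl _ _ ab bc [abB | bcB]; first exact: blocker_leaf_at_hull_edge ab abB.
by apply: blocker_leaf_at_hull_edge (boundary_edgeC bc) _; rewrite // setUC.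
Qed.
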